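(* For any SETAF $S=(A,X)$ it holds that $\sigma(S) = \sigma(D_S)$ for every $\sigma \in \{\mathrm{adm},\mathrm{com},\mathrm{prf},\mathrm{mod}\}$.
   Context: Let $A$ be a fixed finite set of statements. An interpretation is a mapping $v:A\to\{\mathbf{t},\mathbf{f},\mathbf{u}\}$; it is two-valued if it never assigns $\mathbf{u}$. The information ordering is $\mathbf{u}<_i\mathbf{t}$, $\mathbf{u}<_i\mathbf{f}$ (no other strict pairs), extended pointwise to interpretations. The consensus meet $\sqcap_i$ of truth values gives $\mathbf{t}\sqcap_i\mathbf{t}=\mathbf{t}$, $\mathbf{f}\sqcap_i\mathbf{f}=\mathbf{f}$, and $\mathbf{u}$ otherwise; the consensus of a nonempty set of truth values is their greatest lower bound with respect to $\leq_i$. For an interpretation $v$, $[v]_2$ denotes the set of all two-valued interpretations $w$ with $v\leq_i w$. An ADF is $D=(A,L,C)$ where $L\subseteq A\times A$ and each statement $a$ has an acceptance condition given by a propositional formula $\varphi_a$ over its parents. The operator $\Gamma_D$ maps an interpretation $v$ to the interpretation assigning to each $a$ the consensus (greatest lower bound w.r.t. $\leq_i$) of $\{w(\varphi_a) \mid w\in[v]_2\}$. For an ADF $D$, $v$ is admissible iff $v\leq_i\Gamma_D(v)$; complete iff $\Gamma_D(v)=v$; preferred iff it is $\leq_i$-maximal admissible; a two-valued model iff it is two-valued and $\Gamma_D(v)=v$. These sets are denoted $\mathrm{adm}(D),\mathrm{com}(D),\mathrm{prf}(D),\mathrm{mod}(D)$. A SETAF is a pair $S=(A,X)$ with $X\subseteq(2^A\setminus\{\emptyset\})\times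 A$. For a statement $a$ and interpretation $v$: $a$ is acceptable wrt. $v$ if for all $(B,a)\in X$ there is $a'\in B$ with $v(a')=\mathbf{f}$; $a$ is unacceptable wrt. $v$ if there is $(B,a)\in X$ with $v(a')=\mathbf{t}$ for all $a'\in B$. Then: $v\in\mathrm{adm}(S)$ iff for all $a$, $v(a)=\mathbf{t}$ implies $a$ acceptable and $v(a)=\mathbf{f}$ implies $a$ unacceptable wrt. $v$; $v\in\mathrm{com}(S)$ iff for all $a$, $a$ is acceptable wrt. $v$ iff $v(a)=\mathbf{t}$, and $a$ is unacceptable wrt. $v$ iff $v(a)=\mathbf{f}$; $v\in\mathrm{prf}(S)$ iff $v$ is $\leq_i$-maximal admissible; $v\in\mathrm{mod}(S)$ iff $v\in\mathrm{adm}(S)$ and $v$ assigns $\mathbf{u}$ to no statement. The ADF $D_S$ corresponding to $S$ has acceptance formula $\varphi_a=\bigwedge_{(B,a)\in X}\bigvee_{a'\in B}\neg a'$ for each $a\in A$. *)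

From mathcomp Require Import all_boot.

Set Implicit Arguments. Unset Strict Implicit. Unset Printing Implicit Defensive.

Inductive tv := Tt | Ff | Uu.

Definition interp (A : finType) := A -> tv.

Definition le_i_tv (x y : tv) : Prop := x = Uu \/ x = y.
Definition le_i (A : finType) (v w : interp A) : Prop := forall a, le_i_tv (v a) (w a).

Definition two_valued (A : finType) (v : interp A) : Prop := forall a, v a <> Uu.

(* A two-valued interpretation is represented as a boolean function
   (true = t, false = f); tv_of_bool is the embedding. *)
Definition tv_of_bool (b : bool) : tv := if b then Tt else Ff.
Definition interp_of_bool (A : finType) (w : {ffun A -> bool}) : interp A :=
  fun a => tv_of_bool (w a).

(* w \in [v]_2 : v <=_i w (boolean test) *)
Definition compatb (A : finType) (v : interp A) (w : {ffun A -> bool}) : bool :=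
  [forall a, match v a with Tt => w a | Ff => ~~ w a | Uu => true end].

Inductive form (A : Type) :=
| FVar of A | FTop | FBot | FNeg of form A
| FAnd of form A & form A | FOr of form A & form A.
Arguments FTop {A}. Arguments FBot {A}.

Fixpoint feval (A : Type) (w : A -> bool) (f : form A) : bool :=
  match f with
  | FVar a => w a
  | FTop => true
  | FBot => false
  | FNeg g => ~~ feval w g
  | FAnd g h => feval w g && feval w h
  | FOr g h => feval w g || feval w h
  end.

Record ADF (A : finType) := mkADF {
  adf_L : rel A;
  adf_phi : A -> form A }.

(* Consensus (glb w.r.t. <=_i) of the nonempty set {w(phi_a) | w in [v]_2}:
   t if all values are t, f if all values are f, u otherwise. *)
Definition Gamma (A : finType) (D : ADF A) (v : interp A) : interp A :=
  fun a =>
    if [forall w : {ffun A -> bool}, compatb v w ==> feval w (adf_phi D a)]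
    then Tt
    else if [forall w : {ffun A -> bool}, compatb v w ==> ~~ feval w (adf_phi D a)]
    then Ff else Uu.

Definition adm_ADF (A : finType) (D : ADF A) (v : interp A) : Prop :=
  le_i v (Gamma D v).
Definition com_ADF (A : finType) (D : ADF A) (v : interp A) : Prop :=
  forall a, Gamma D v a = v a.
Definition prf_ADF (A : finType) (D : ADF A) (v : interp A) : Prop :=
  adm_ADF D v /\ forall v', adm_ADF D v' -> le_i v v' -> le_i v' v.
Definition mod_ADF (A : finType) (D : ADF A) (v : interp A) : Prop :=
  two_valued v /\ forall a, Gamma D v a = v a.

Record SETAF (A : finType) := mkSETAF {
  setaf_X : {set {set A} * A};
  setaf_nonempty : forall B a, (B, a) \in setaf_X -> B != set0 }.

Section SetafSem.
Variables (A : finType) (S : SETAF A).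
Local Notation X := (setaf_X S).

Definition acceptable (v : interp A) (a : A) : Prop :=
  forall B, (B, a) \in X -> exists2 a', a' \in B & v a' = Ff.
Definition unacceptable (v : interp A) (a : A) : Prop :=
  exists2 B, (B, a) \in X & forall a', a' \in B -> v a' = Tt.

Definition adm_S (v : interp A) : Prop :=
  forall a, (v a = Tt -> acceptable v a) /\ (v a = Ff -> unacceptable v a).
Definition com_S (v : interp A) : Prop :=
  forall a, (acceptable v a <-> v a = Tt) /\ (unacceptable v a <-> v a = Ff).
Definition prf_S (v : interp A) : Prop :=
  adm_S v /\ forall v', adm_S v' -> le_i v v' -> le_i v' v.
Definition mod_S (v : interp A) : Prop :=
  adm_S v /\ two_valued v.

(* the ADF D_S: links (b, a) whenever b occurs in some attack (B, a);
   phi_a = /\_{(B,a) in X} \/_{a' in B} ~ a'  (empty conjunction = T) *)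
Definition big_and (fs : seq (form A)) : form A := foldr (@FAnd A) FTop fs.
Definition big_or (fs : seq (form A)) : form A := foldr (@FOr A) FBot fs.

Definition phi_S (a : A) : form A :=
  big_and [seq big_or [seq FNeg (FVar a') | a' <- enum (p.1 : {set A})]
          | p : {set A} * A <- enum X & p.2 == a].

Definition L_S : rel A :=
  fun b a => [exists B : {set A}, ((B, a) \in X) && (b \in B)].

Definition D_of_S : ADF A := mkADF L_S phi_S.
End SetafSem.

From mathcomp Require Import all_boot.

Set Implicit Arguments. Unset Strict Implicit. Unset Printing Implicit Defensive.

(** The acceptance formula of [D_S] is antitone in the valuation, so among the
    two-valued completions of [v] it is hardest to satisfy when every [u] is
    read as [t], and hardest to falsify when every [u] is read as [f].  Testing
    these two extreme completions shows that [Gamma_{D_S}(v)] assigns [t] to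
    exactly the acceptable and [f] to exactly the unacceptable statements,
    which is literally how the SETAF semantics are phrased. *)

Lemma feval_big_and (A : finType) (w : A -> bool) (fs : seq (form A)) :
  feval w (big_and fs) = all (feval w) fs.
Proof. by elim: fs => //= f fs ->. Qed.

Lemma feval_big_or (A : finType) (w : A -> bool) (fs : seq (form A)) :
  feval w (big_or fs) = has (feval w) fs.
Proof. by elim: fs => //= f fs ->. Qed.

Definition completion (A : finType) (d : bool) (v : interp A) : {ffun A -> bool} :=
  [ffun x => match v x with Tt => true | Ff => false | Uu => d end].

Lemma compatb_completion (A : finType) (d : bool) (v : interp A) :
  compatb v (completion d v).
Proof. by apply/forallP => x; rewrite ffunE; case: (v x). Qed.

Lemma two_valued_adm_ADF_fixpoint (A : finType) (D : ADF A) (v : interp A) :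
  two_valued v -> adm_ADF D v -> forall a, Gamma D v a = v a.
Proof. by move=> tv adm a; case: (adm a) => // va; case: (tv a). Qed.

Section SetafAsADF.
Variables (A : finType) (S : SETAF A).
Local Notation X := (setaf_X S).
Local Notation D := (D_of_S S).

Lemma feval_phi_S (w : A -> bool) a :
  feval w (phi_S S a) <->
  (forall B, (B, a) \in X -> exists2 a', a' \in B & w a' = false).
Proof.
rewrite /phi_S feval_big_and all_map all_filter; split.
- move=> /allP attacks_ok B BX.
  have := attacks_ok (B, a); rewrite mem_enum BX /= eqxx => /(_ isT).
  rewrite feval_big_or has_map => /hasP [a' + /negbTE wa'].
  by rewrite mem_enum; exists a'.
- move=> attacks_ok; apply/allP => -[B b]; rewrite mem_enum => BX.
  apply/implyP => /eqP /= eq_ba; subst b.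
  have [a' a'B wa'] := attacks_ok B BX.
  by rewrite feval_big_or has_map; apply/hasP; exists a'; rewrite ?mem_enum //= wa'.
Qed.

Lemma acceptable_unacceptable v a :
  acceptable S v a -> unacceptable S v a -> False.
Proof. by move=> acc [B BX all_t]; have [a' /all_t ->] := acc B BX. Qed.

Lemma compat_phi_S_acceptable (v : interp A) a :
  [forall w, compatb v w ==> feval w (phi_S S a)] <-> acceptable S v a.
Proof.
split.
- move=> /forallP /(_ (completion true v)).
  rewrite compatb_completion => /feval_phi_S sat B BX.
  have [a' a'B] := sat B BX; rewrite ffunE.
  by case va': (v a') => //; exists a'.
- move=> acc; apply/forallP => w; apply/implyP => /forallP compat.
  apply/feval_phi_S => B BX; have [a' a'B va'] := acc B BX.
  by exists a' => //; move: (compat a'); rewrite va' => /negbTE.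
Qed.

Lemma compat_not_phi_S_unacceptable (v : interp A) a :
  [forall w, compatb v w ==> ~~ feval w (phi_S S a)] <-> unacceptable S v a.
Proof.
split.
- move=> /forallP /(_ (completion false v)).
  rewrite compatb_completion /=; set w := completion false v.
  have [/existsP [B /andP [BX /forallP all_t]] _ | /existsPn none] :=
    boolP [exists B, ((B, a) \in X) && [forall x in B, w x]].
    exists B => // x xB; move: (all_t x).
    by rewrite xB ffunE; case: (v x).
  move=> /negP []; apply/feval_phi_S => B BX.
  move: (none B); rewrite BX => /forallPn [x]; rewrite negb_imply => /andP [xB wx].
  by exists x => //; apply: negbTE.
- move=> [B BX all_t]; apply/forallP => w; apply/implyP => /forallP compat.
  apply/negP => /feval_phi_S /(_ B BX) [a' a'B wa'].
  by move: (compat a'); rewrite all_t // wa'.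
Qed.

Lemma Gamma_D_S_Tt v a : Gamma D v a = Tt <-> acceptable S v a.
Proof.
rewrite /Gamma /=; split; last by move/compat_phi_S_acceptable => ->.
by case: ifP => [/compat_phi_S_acceptable // | _]; case: ifP.
Qed.

Lemma Gamma_D_S_Ff v a : Gamma D v a = Ff <-> unacceptable S v a.
Proof.
rewrite /Gamma /=; split.
  by case: ifP => //; case: ifP => // /compat_not_phi_S_unacceptable.
move=> unacc; case: ifP => [/compat_phi_S_acceptable acc | _].
  by case: (acceptable_unacceptable acc unacc).
by move/compat_not_phi_S_unacceptable: unacc => ->.
Qed.

Lemma adm_S_ADF v : adm_S S v <-> adm_ADF D v.
Proof.
split=> [adm a | adm a].
- have [acc unacc] := adm a; rewrite /le_i_tv.
  case va: (v a); [right | right | by left].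
  + exact/esym/Gamma_D_S_Tt/acc.
  + exact/esym/Gamma_D_S_Ff/unacc.
- by split=> va; case: (adm a); rewrite va // => /esym;
     [move/Gamma_D_S_Tt | move/Gamma_D_S_Ff].
Qed.

Lemma com_S_ADF v : com_S S v <-> com_ADF D v.
Proof.
split=> [com a | com a].
- have [[acc_t t_acc] [unacc_f f_unacc]] := com a.
  case va: (v a); first exact/Gamma_D_S_Tt/t_acc.
    exact/Gamma_D_S_Ff/f_unacc.
  case Ga: (Gamma D v a) => //.
    by move/Gamma_D_S_Tt/acc_t: Ga; rewrite va.
  by move/Gamma_D_S_Ff/unacc_f: Ga; rewrite va.
- move: (Gamma_D_S_Tt v a) (Gamma_D_S_Ff v a); rewrite com => t_acc f_unacc.
  by split; apply: iff_sym.
Qed.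

Lemma prf_S_ADF v : prf_S S v <-> prf_ADF D v.
Proof.
split=> -[adm maximal]; split=> [|v' /adm_S_ADF adm'].
- exact/adm_S_ADF.
- exact: maximal.
- exact/adm_S_ADF.
- exact: maximal.
Qed.

Lemma mod_S_ADF v : mod_S S v <-> mod_ADF D v.
Proof.
split=> [[/adm_S_ADF adm tv] | [tv Gamma_fix]]; split=> //.
- exact: two_valued_adm_ADF_fixpoint.
- by apply/adm_S_ADF => a; right; rewrite Gamma_fix.
Qed.

End SetafAsADF.

Theorem proposition1 (A : finType) (S : SETAF A) :
  (forall v : interp A, adm_S S v <-> adm_ADF (D_of_S S) v) /\
  (forall v : interp A, com_S S v <-> com_ADF (D_of_S S) v) /\
  (forall v : interp A, prf_S S v <-> prf_ADF (D_of_S S) v) /\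
  (forall v : interp A, mod_S S v <-> mod_ADF (D_of_S S) v).
Proof.
split; first exact: adm_S_ADF.
split; first exact: com_S_ADF.
split; first exact: prf_S_ADF.
exact: mod_S_ADF.
Qed.
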